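(* Let $n\ge3$ be odd, $M\in\mathcal S^{n\times n}$ distinguished, and $S$ a spin$^c$ set for $M$. If $J_M(U)\ne\emptyset$ for every $U\subseteq S$ with $|U|=3$, then there exists $g\in G_n$ such that $(gM,gS)$ is a spin$^c$ pair in standard form.
   Context: $\mathcal S=\{0,1,2,3\}$ is the Klein four-group ($\mathbb Z_2$-vector space) with $x+x=0$, $1+2=3$, $1+3=2$, $2+3=1$; conjugation is the involution $\bar0=0,\bar1=1,\bar2=3,\bar3=2$. $\mathcal P_n$ is the power set of $\{1,\dots,n\}$ (addition = symmetric difference); $|U|_2=|U|\bmod2$; $J_M(U)=\{j:\sum_{i\in U}M_{ij}=1\}$; $r_i^S(M)=\sum_{j\in S}M_{ij}$. $S$ is a spin$^c$ set for $M$ (and $(M,S)$ a spin$^c$ pair) if $|(J_M(U)+U)\cap S|_2=\binom{|U|}2\bmod 2$ for all $U\in\mathcal P_n$. A square matrix is distinguished if it has $1$ on the diagonal and $2$ or $3$ off it; self-conjugate if $A^t=\overline A$. $G_n=C_2\wr S_n$ acts on $\mathcal S^{n\times n}$ ($k$-th generator of $C_2^n$ conjugates column $k$; $\sigma\in S_n$ acts by $P_\sigma MP_\sigma^{-1}$) and on $\mathcal P_n$ via $G_n\to S_n$. A spin$^c$ pair $(M,S)$ is in standard form if: (i) $S=\{1,\dots,|S|\}$; (ii) the first row of $M$ is $[1,2,\dots,2]$; (iii) $M$ is distinguished with block form $\begin{bmatrix}A&2&*\\2&B&*\\ *&*&*\end{bmatrix}$, diagonal blocks of degrees $k,l,r$,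 the blocks marked $2$ having all entries $2$; (iv) $k\ge l$, $k+l=|S|$; (v) $A,B$ self-conjugate; (vi) $r_1^S(M)=\dots=r_k^S(M)\ne r_{k+1}^S(M)=\dots=r_{k+l}^S(M)$ (possibly $l=0$). *)

From mathcomp Require Import all_boot all_order all_algebra all_fingroup.
Set Implicit Arguments. Unset Strict Implicit. Unset Printing Implicit Defensive.

(* The Klein four-group S = {0,1,2,3}, represented by 'I_4 with bitwise xor. *)
Definition KS := 'I_4.
Definition k0 : KS := @Ordinal 4 0 isT.
Definition k1 : KS := @Ordinal 4 1 isT.
Definition k2 : KS := @Ordinal 4 2 isT.
Definition k3 : KS := @Ordinal 4 3 isT.

(* bitwise xor of the two low bits *)
Definition kaddn (a b : nat) : nat :=
  (odd a (+) odd b) + 2 * (odd a./2 (+) odd b./2).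
Definition kadd (x y : KS) : KS := inord (kaddn x y).
Definition ksum (s : seq KS) : KS := foldr kadd k0 s.

Definition kconj (x : KS) : KS :=
  if x == k2 then k3 else if x == k3 then k2 else x.

Section Defs.
Variable n : nat.
Implicit Types (M : 'M[KS]_n) (U S : {set 'I_n}).

Definition JM M U : {set 'I_n} :=
  [set j | ksum [seq M i j | i <- enum U] == k1].

Definition rS M S (i : 'I_n) : KS := ksum [seq M i j | j <- enum S].

Definition symdiff U S : {set 'I_n} := (U :\: S) :|: (S :\: U).

Definition spinc M S : Prop :=
  forall U : {set 'I_n},
    odd #|symdiff (JM M U) U :&: S| = odd 'C(#|U|, 2).

Definition distinguished M : Prop :=
  (forall i, M i i = k1) /\
  (forall i j, i != j -> M i j = k2 \/ M i j = k3).

(* action of g = (eps, s) in C_2 wr S_n: first conjugate the columns k with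
   eps k = true, then conjugate by the permutation matrix of s, so that
   entry (a,b) moves to (s a, s b). *)
Definition act_mx (eps : {ffun 'I_n -> bool}) (s : 'S_n) M : 'M[KS]_n :=
  \matrix_(i, j)
    (let a := (s^-1)%g i in let b := (s^-1)%g j in
     if eps b then kconj (M a b) else M a b).

Definition act_set (s : 'S_n) S : {set 'I_n} := s @: S.

(* standard form of a spin^c pair (indices are 0-based here) *)
Definition standard_form M S : Prop :=
  spinc M S /\
  S = [set i : 'I_n | i < #|S|] /\
  (forall i j : 'I_n, val i = 0 ->
                 M i j = (if val j == 0 then k1 else k2)) /\
  distinguished M /\
  exists k l : nat,
    l <= k /\ k + l = #|S| /\
    (* (iii) block form: off-diagonal blocks between A and B are all 2 *)
    (forall i j : 'I_n, i < k -> k <= j < k + l -> M i j = k2 /\ M j i = k2) /\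
    (forall i j : 'I_n, i < k -> j < k -> M j i = kconj (M i j)) /\
    (forall i j : 'I_n, k <= i < k + l -> k <= j < k + l ->
        M j i = kconj (M i j)) /\
    (forall i j : 'I_n, i < k -> j < k -> rS M S i = rS M S j) /\
    (forall i j : 'I_n, k <= i < k + l -> k <= j < k + l ->
        rS M S i = rS M S j) /\
    (forall i j : 'I_n, i < k -> k <= j < k + l -> rS M S i <> rS M S j).

End Defs.

(* Every ingredient of the statement is invariant under G_n, so we
   first normalize: pick x0 in S (S is nonempty, since the spin^c condition for
   a pair U forces an odd, hence nonzero, count), conjugate the columns j where
   M x0 j = 3 and swap x0 with the first index; row 0 becomes [1, 2, ..., 2].
   The arithmetic heart is a parity count: a column sum of M over U has "high
   bit" |U \ {j}| mod 2, so J_M(U) is disjoint from U for |U| even and contained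
   in U for |U| odd.  Then the spin^c condition says that for a pair {u, v} in
   S the set J_M({u, v}) meets S oddly, and for a triple U of S (with J_M(U)
   nonempty) exactly one index of U is missing from J_M(U).  With row x0
   normalized, "v beats w iff M v w = 3" is a transitive tournament on
   S \ {x0} in which every player beats an odd number of players; this is
   impossible unless S \ {x0} is empty.  So the normalized S is {0}, and a
   singleton is in standard form with k = 1, l = 0. *)

From HB Require Import structures.
From mathcomp Require Import all_boot all_order all_algebra all_fingroup.
From mathcomp Require Import zify.
Set Implicit Arguments. Unset Strict Implicit. Unset Printing Implicit Defensive.

Ltac klein_cases x := let lt4 := fresh in case: x => [[|[|[|[|x]]]] lt4] //.

Lemma kaddn_lt4 a b : kaddn a b < 4.
Proof. by rewrite /kaddn; case: (_ (+) _); case: (_ (+) _). Qed.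

Lemma val_kadd x y : val (kadd x y) = kaddn x y.
Proof. exact/inordK/kaddn_lt4. Qed.

Lemma kaddA : associative kadd.
Proof.
move=> x y z; apply: val_inj; rewrite /= !val_kadd.
by klein_cases x; klein_cases y; klein_cases z.
Qed.

Lemma kaddC : commutative kadd.
Proof.
by move=> x y; apply: val_inj; rewrite /= !val_kadd; klein_cases x; klein_cases y.
Qed.

Lemma kadd0k : left_id k0 kadd.
Proof. move=> x; apply: val_inj; rewrite /= !val_kadd; klein_cases x. Qed.

HB.instance Definition _ := Monoid.isComLaw.Build KS k0 kadd kaddA kaddC kadd0k.

Lemma ksumE (I : finType) (A : {pred I}) (F : I -> KS) :
  ksum [seq F i | i <- enum A] = \big[kadd/k0]_(i in A) F i.
Proof. by rewrite /ksum foldrE big_map big_enum. Qed.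

(* The high bit x -> [x in {2, 3}] is a homomorphism onto (bool, xor); it
   is 1 on the off-diagonal values 2, 3 of a distinguished matrix and 0 on 1. *)
Definition hibit (x : KS) : bool := odd (val x)./2.
Definition offdiag (x : KS) : bool := (x == k2) || (x == k3).

Lemma hibitD x y : hibit (kadd x y) = hibit x (+) hibit y.
Proof. by rewrite /hibit val_kadd; klein_cases x; klein_cases y. Qed.

Lemma hibit0 : hibit k0 = false. Proof. by []. Qed.

Lemma hibit_offdiag x : offdiag x -> hibit x.
Proof. by rewrite /offdiag -!val_eqE /=; klein_cases x. Qed.

Lemma kadd_eq0 x y : (kadd x y == k0) = (x == y).
Proof. by rewrite -!val_eqE /= val_kadd; klein_cases x; klein_cases y. Qed.

Lemma kadd1_eq1 x : (kadd k1 x == k1) = (x == k0).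
Proof. by rewrite -!val_eqE /= val_kadd; klein_cases x. Qed.

Lemma kadd2_eq1 x : (kadd k2 x == k1) = (x == k3).
Proof. by rewrite -!val_eqE /= val_kadd; klein_cases x. Qed.

Lemma val_kconj x :
  val (kconj x) = (if val x == 2 then 3 else if val x == 3 then 2 else val x).
Proof. by rewrite /kconj; klein_cases x. Qed.

Lemma kconjD x y : kconj (kadd x y) = kadd (kconj x) (kconj y).
Proof.
apply: val_inj; rewrite /= val_kconj !val_kadd !val_kconj.
by klein_cases x; klein_cases y.
Qed.

Lemma kconj_eq1 x : (kconj x == k1) = (x == k1).
Proof. by rewrite /kconj; klein_cases x. Qed.

Definition kconj_if (b : bool) (x : KS) : KS := if b then kconj x else x.

Lemma kconj_ifD b x y : kconj_if b (kadd x y) = kadd (kconj_if b x) (kconj_if b y).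
Proof. by case: b; rewrite //= kconjD. Qed.

Lemma kconj_if0 b : kconj_if b k0 = k0.
Proof. by case: b. Qed.

Section Distinguished.
Variables (n : nat) (M : 'M[KS]_n).
Hypothesis dM : distinguished M.

Lemma offdiagM i j : i != j -> offdiag (M i j).
Proof. by case/(dM.2) => ->; rewrite /offdiag eqxx ?orbT. Qed.

(* The high bit of a column sum over U counts the off-diagonal terms. *)
Lemma hibit_colsum (U : {set 'I_n}) j :
  hibit (\big[kadd/k0]_(i in U) M i j) = odd #|U :\ j|.
Proof.
rewrite (big_morph hibit hibitD hibit0) (bigID (pred1 j)) /=.
have -> : \big[addb/false]_(i in U | i == j) hibit (M i j) = false.
  by apply: big1 => i /andP [_ /eqP ->]; rewrite dM.1.
rewrite (eq_bigr (fun=> odd 1)) => [|i /andP [_ ij]]; last exact/hibit_offdiag/offdiagM.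
rewrite -(big_morph odd oddD (erefl (odd 0))) sum1_card /=; congr odd.
by apply: eq_card => i; rewrite !inE andbC.
Qed.

Lemma JM_parity (U : {set 'I_n}) j : j \in JM M U -> ~~ odd #|U :\ j|.
Proof. by rewrite inE ksumE -hibit_colsum => /eqP ->. Qed.

Lemma JM_even_disjoint (U : {set 'I_n}) j :
  ~~ odd #|U| -> j \in U -> j \notin JM M U.
Proof.
move=> evenU jU; apply: contraL evenU => /JM_parity.
by rewrite (cardsD1 j U) jU /= negbK.
Qed.

Lemma JM_odd_sub (U : {set 'I_n}) : odd #|U| -> JM M U \subset U.
Proof.
move=> oddU; apply/subsetP => j /JM_parity; apply: contraNT => jU.
suff -> : U :\ j = U by rewrite oddU.
by apply/setP => i; rewrite in_setD1 andb_idl // => iU; apply: contraNneq jU => <-.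
Qed.

(* For j in U, the diagonal 1 splits off: j is in J_M(U) iff the remaining
   entries of column j sum to 0. *)
Lemma mem_JM_col (U : {set 'I_n}) j : j \in U ->
  (j \in JM M U) = (\big[kadd/k0]_(i in U :\ j) M i j == k0).
Proof.
move=> jU; rewrite inE ksumE (bigD1 j) //= dM.1 kadd1_eq1.
by under [X in _ = (X == _)]eq_bigl => i do rewrite in_setD1 andbC.
Qed.

Lemma mem_JM3 x y z : x != y -> x != z -> y != z ->
  (z \in JM M [set x; y; z]) = (M x z == M y z).
Proof.
move=> xy xz yz; have zxy : z \notin [set x; y] by rewrite !inE !(eq_sym z) negb_or xz.
rewrite mem_JM_col; last by rewrite !inE eqxx orbT.
by rewrite setUC setU1K // big_setU1 ?big_set1 ?inE //= kadd_eq0.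
Qed.

End Distinguished.

Lemma card_symdiffI n (J U S : {set 'I_n}) : U \subset S ->
  #|symdiff J U :&: S| = #|J :&: S :\: U| + #|U :\: J|.
Proof.
move=> US; have -> : symdiff J U :&: S = (J :&: S :\: U) :|: (U :\: J).
  apply/setP => j; rewrite /symdiff !inE.
  case jU: (j \in U); last by case: (j \in J); case: (j \in S).
  by rewrite (subsetP US j jU); case: (j \in J).
rewrite cardsU; suff -> : (J :&: S :\: U) :&: (U :\: J) = set0 by rewrite cards0 subn0.
by apply/setP => j; rewrite !inE; case: (j \in U); rewrite ?andbF.
Qed.

(* The empty set is never spin^c once n >= 2: test it on a pair. *)
Lemma spinc_nonempty n (M : 'M[KS]_n) S : 1 < n -> spinc M S -> S != set0.
Proof.
move=> n_gt1 spM; apply/eqP => S0.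
have := spM [set Ordinal (ltnW n_gt1); Ordinal n_gt1].
by rewrite S0 setI0 cards0 cards2.
Qed.

Section Spinc.
Variables (n : nat) (M : 'M[KS]_n) (S : {set 'I_n}).
Hypotheses (dM : distinguished M) (spM : spinc M S).

Lemma spinc_pair u v : u \in S -> v \in S -> u != v ->
  odd #|JM M [set u; v] :&: S|.
Proof.
move=> uS vS uv; set U := [set u; v].
have US : U \subset S by apply/subsetP => j; rewrite !inE => /orP [] /eqP ->.
have evenU : ~~ odd #|U| by rewrite cards2 uv.
have disjUJ : [disjoint U & JM M U].
  by rewrite disjoint_subset; apply/subsetP => j jU; rewrite inE JM_even_disjoint.
have := spM U; rewrite card_symdiffI // cards2 uv.
have -> : JM M U :&: S :\: U = JM M U :&: S.
  by apply/setDidPl; rewrite disjoint_sym (disjointWr (subsetIl _ _) disjUJ).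
have -> : U :\: JM M U = U by apply/setDidPl.
by rewrite cards2 uv oddD; case: (odd _).
Qed.

Lemma spinc_triple (U : {set 'I_n}) : U \subset S -> #|U| = 3 -> JM M U != set0 ->
  #|U :\: JM M U| = 1.
Proof.
move=> US U3 J0; have JU : JM M U \subset U by apply: JM_odd_sub; rewrite ?U3.
have := spM U; rewrite card_symdiffI // U3.
have -> : JM M U :&: S :\: U = set0.
  apply/setP => j; rewrite in_setD in_setI in_set0.
  by case: (boolP (j \in JM M U)) => [/(subsetP JU) -> | _]; rewrite ?andbF.
rewrite cards0 add0n cardsD (setIidPr JU) U3.
have : 0 < #|JM M U| by rewrite card_gt0.
by case: #|JM M U| => [|[|[|]]].
Qed.

Lemma triple_columns (U : {set 'I_n}) a b : U \subset S -> #|U| = 3 -> JM M U != set0 ->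
  a \in U -> a \notin JM M U -> b \in U -> b != a -> b \in JM M U.
Proof.
move=> US U3 J0 aU aJ bU; apply: contraNT => bJ.
have /eqP/cards1P [c Uc] := spinc_triple US U3 J0.
have : a \in U :\: JM M U by rewrite inE aJ.
have : b \in U :\: JM M U by rewrite inE bJ.
by rewrite Uc !inE => /eqP -> /eqP ->.
Qed.

End Spinc.

Definition triples_hit n (M : 'M[KS]_n) (S : {set 'I_n}) : Prop :=
  forall U : {set 'I_n}, U \subset S -> #|U| = 3 -> JM M U != set0.

Section Action.
Variables (n : nat) (eps : {ffun 'I_n -> bool}) (s : 'S_n).
Implicit Types (M : 'M[KS]_n) (A U S : {set 'I_n}).

Lemma act_mxE M i j : act_mx eps s M (s i) (s j) = kconj_if (eps j) (M i j).
Proof. by rewrite /act_mx mxE !permK. Qed.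

Lemma mem_act_set A i : (s i \in s @: A) = (i \in A).
Proof. exact/mem_imset/perm_inj. Qed.

Lemma act_setK A : s @: ((s^-1)%g @: A) = A.
Proof. by rewrite -imset_comp (eq_imset _ (permKV s)) imset_id. Qed.

Lemma card_act_set A : #|s @: A| = #|A|.
Proof. exact/card_imset/perm_inj. Qed.

(* Column conjugation commutes with summing a column, and preserves the
   test "= 1"; hence J_M is equivariant. *)
Lemma JM_act M A : JM (act_mx eps s M) (s @: A) = s @: JM M A.
Proof.
apply/setP => j; rewrite -(permKV s j) mem_act_set !inE !ksumE.
rewrite big_imset /=; last by move=> ? ? _ _; apply: perm_inj.
under eq_bigr => i _ do rewrite act_mxE.
rewrite -(big_morph _ (kconj_ifD _) (kconj_if0 _)).
by case: (eps _); rewrite //= kconj_eq1.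
Qed.

Lemma symdiff_act A U S :
  symdiff (s @: A) (s @: U) :&: s @: S = s @: (symdiff A U :&: S).
Proof.
by apply/setP => j; rewrite -(permKV s j) /symdiff !inE !mem_act_set !inE.
Qed.

Lemma spinc_act M S : spinc M S -> spinc (act_mx eps s M) (s @: S).
Proof.
move=> spM U; rewrite -(act_setK U) JM_act symdiff_act !card_act_set.
exact: spM.
Qed.

Lemma triples_hit_act M S : triples_hit M S -> triples_hit (act_mx eps s M) (s @: S).
Proof.
move=> hitM U; rewrite -(act_setK U) JM_act card_act_set imset_eq0 => sub U3.
apply: hitM U3; apply/subsetP => i iU.
by rewrite -mem_act_set (subsetP sub) ?mem_act_set.
Qed.

Lemma distinguished_act M : distinguished M -> distinguished (act_mx eps s M).
Proof.
case=> diagM offM; split=> [i | i j].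
  by rewrite -(permKV s i) act_mxE diagM; case: (eps _).
rewrite -(permKV s i) -(permKV s j) act_mxE (inj_eq perm_inj) => /offM.
by case: (eps _) => //= -[] ->; [right | left].
Qed.

End Action.

Lemma card_set3 (T : finType) (x y z : T) : x != y -> x != z -> y != z ->
  #|[set x; y; z]| = 3.
Proof.
by move=> xy xz yz; rewrite setUC cardsU1 cards2 !inE xy negb_or !(eq_sym z) xz yz.
Qed.

Section Normalized.
Variables (n : nat) (M : 'M[KS]_n) (S : {set 'I_n}) (x0 : 'I_n).
Hypotheses (dM : distinguished M) (spM : spinc M S) (hitM : triples_hit M S).
Hypotheses (x0S : x0 \in S) (row0 : forall j, j != x0 -> M x0 j = k2).

Lemma triple_columnsS x y z a b : x \in S -> y \in S -> z \in S ->
  x != y -> x != z -> y != z ->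
  a \in [set x; y; z] -> a \notin JM M [set x; y; z] ->
  b \in [set x; y; z] -> b != a -> b \in JM M [set x; y; z].
Proof.
move=> xS yS zS xy xz yz; set U := [set x; y; z]; have US : U \subset S.
  by apply/subsetP => j; rewrite !inE -orbA => /or3P [] /eqP ->.
have U3 : #|U| = 3 by exact: card_set3.
exact: triple_columns (hitM US U3).
Qed.

(* Read M as a tournament on S' = S \ {x0}: v beats j when M v j = 3. *)
Definition beaten (v : 'I_n) : {set 'I_n} := [set j in S :\ x0 | M v j == k3].

Lemma beaten_JM v : v != x0 -> beaten v = JM M [set x0; v] :&: S.
Proof.
move=> vx0; apply/setP => j; rewrite in_setI [j \in beaten v]inE in_setD1.
case: (eqVneq j x0) => [-> | jx0] /=.
  by rewrite (negbTE (JM_even_disjoint dM _ _)) ?cards2 1?eq_sym ?vx0 ?inE ?eqxx.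
rewrite inE ksumE big_setU1 ?big_set1 ?inE 1?eq_sym //= row0 // kadd2_eq1.
by rewrite andbC eq_sym.
Qed.

Lemma beaten_odd v : v \in S :\ x0 -> odd #|beaten v|.
Proof.
by rewrite in_setD1 => /andP [vx0 vS]; rewrite beaten_JM // spinc_pair 1?eq_sym.
Qed.

(* The triple {x0, v, w}: column w of M disagrees (2 against 3), so column v
   agrees, i.e. if v beats w then w does not beat v. *)
Lemma beats_antisym v w : v \in S :\ x0 -> w \in S :\ x0 ->
  M v w = k3 -> M w v = k2.
Proof.
rewrite !in_setD1 => /andP [vx0 vS] /andP [wx0 wS] Mvw.
have vw : v != w by apply: contra_eqN Mvw => /eqP <-; rewrite dM.1.
have x0v : x0 != v by rewrite eq_sym.
have x0w : x0 != w by rewrite eq_sym.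
have wJ : w \notin JM M [set x0; v; w] by rewrite (mem_JM3 dM x0v x0w vw) row0 // Mvw.
have wU : w \in [set x0; v; w] by rewrite !inE eqxx !orbT.
have vJ : v \in JM M [set x0; v; w].
  by apply: (triple_columnsS x0S vS wS x0v x0w vw wU wJ); rewrite ?inE ?eqxx ?orbT.
by move: vJ; rewrite setUAC (mem_JM3 dM x0w x0v) 1?eq_sym // row0 // => /eqP.
Qed.

(* The triple {v, w, u}: column w disagrees (3 against 2), so column u
   agrees, i.e. beating is transitive. *)
Lemma beats_trans v w u : v \in S :\ x0 -> w \in S :\ x0 -> u \in S :\ x0 ->
  M v w = k3 -> M w u = k3 -> M v u = k3.
Proof.
move=> vS' wS' uS' Mvw Mwu.
have Mwv := beats_antisym vS' wS' Mvw; have Muw := beats_antisym wS' uS' Mwu.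
have vw : v != w by apply: contra_eqN Mvw => /eqP <-; rewrite dM.1.
have wu : w != u by apply: contra_eqN Mwu => /eqP <-; rewrite dM.1.
have vu : v != u by apply: contra_eqN Mwv => /eqP ->; rewrite Mwu.
move: vS' wS' uS'; rewrite !in_setD1 => /andP [_ vS] /andP [_ wS] /andP [_ uS].
have uw : u != w by rewrite eq_sym.
have wJ : w \notin JM M [set v; u; w] by rewrite (mem_JM3 dM vu vw uw) Mvw Muw.
have wU : w \in [set v; u; w] by rewrite !inE eqxx !orbT.
have uJ : u \in JM M [set v; u; w].
  by apply: (triple_columnsS vS uS wS vu vw uw wU wJ); rewrite ?inE ?eqxx ?orbT.
by move: uJ; rewrite setUAC (mem_JM3 dM vw vu wu) Mwu => /eqP.
Qed.

Lemma beaten_shrinks v w : v \in S :\ x0 -> w \in beaten v ->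
  beaten w \subset beaten v :\ w.
Proof.
move=> vS' /setIdP [wS' /eqP Mvw]; apply/subsetP => u /setIdP [uS' /eqP Mwu].
rewrite !inE -!in_setD1 uS' (beats_trans vS' wS' uS' Mvw Mwu) eqxx !andbT.
by apply: contra_eqN Mwu => /eqP ->; rewrite dM.1.
Qed.

(* A finite tournament cannot be transitive with all out-degrees odd, so S'
   is empty. *)
Lemma normalized_singleton : S = [set x0].
Proof.
apply/eqP; rewrite eqEsubset sub1set x0S andbT; apply/subsetP => v vS.
rewrite inE; apply/negPn/negP => vx0.
have vS' : v \in S :\ x0 by rewrite in_setD1 vx0.
have [v' v'S' v'min] := arg_minnP (fun v => #|beaten v|) vS'.
have /card_gt0P [w wv'] : 0 < #|beaten v'| by apply: odd_gt0; apply: beaten_odd.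
have := subset_leq_card (beaten_shrinks v'S' wv').
have [wS' _] := setIdP wv'; have := v'min w wS'.
rewrite (cardsD1 w (beaten v')) wv'; lia.
Qed.

End Normalized.

(* Moving x0 to position z and conjugating the columns where row x0 has a 3
   turns row x0 of a distinguished matrix into the row z = [1, 2, ..., 2]. *)
Lemma normalize_row n (M : 'M[KS]_n) (x0 z : 'I_n) : distinguished M ->
  exists (eps : {ffun 'I_n -> bool}) (s : 'S_n),
    s x0 = z /\ forall j, j != z -> act_mx eps s M z j = k2.
Proof.
move=> dM; set t := tperm x0 z; have tx0 : t x0 = z by apply: tpermL.
exists [ffun j => M x0 j == k3], t; split=> // j.
rewrite -(permKV t j) -tx0 (inj_eq perm_inj) act_mxE ffunE.
by move: (t^-1 j)%g => j0; rewrite eq_sym => /dM.2 [] ->.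
Qed.

Lemma standard_form_singleton n (M : 'M[KS]_n) (z : 'I_n) : val z = 0 ->
  distinguished M -> spinc M [set z] -> (forall j, j != z -> M z j = k2) ->
  standard_form M [set z].
Proof.
move=> z0 dM spM rowz.
have lt1_z (i : 'I_n) : i < 1 -> i = z.
  by move=> i_lt1; apply: val_inj; rewrite /= z0; lia.
rewrite /standard_form cards1; split=> //; split.
  by apply/setP => i; rewrite !inE; apply/eqP/idP => [-> | /lt1_z]; rewrite ?z0.
split.
  move=> i j i0; rewrite (lt1_z i) ?i0 // -z0 val_eqE.
  by case: eqVneq => [-> | /rowz //]; apply: dM.1.
split=> //; exists 1, 0; do 2!split=> //.
split; first by move=> i j _; lia.
split; first by move=> i j /lt1_z -> /lt1_z ->; rewrite dM.1.
split; first by move=> i j; lia.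
split; first by move=> i j /lt1_z -> /lt1_z ->.
by split=> i j; lia.
Qed.

Theorem mainTheorem14 (n : nat) (M : 'M[KS]_n) (S : {set 'I_n}) :
  3 <= n -> odd n ->
  distinguished M ->
  spinc M S ->
  (forall U : {set 'I_n}, U \subset S -> #|U| = 3 -> JM M U != set0) ->
  exists (eps : {ffun 'I_n -> bool}) (s : 'S_n),
    standard_form (act_mx eps s M) (act_set s S).
Proof.
move=> n_ge3 _ dM spM hitM.
have /set0Pn [x0 x0S] : S != set0 by apply: spinc_nonempty spM; lia.
have n_gt0 : 0 < n by lia.
pose z : 'I_n := Ordinal n_gt0.
have [eps [s [sx0 rowz]]] := normalize_row x0 z dM.
exists eps, s; rewrite /act_set.
have dM' := distinguished_act eps s dM.
have spM' := spinc_act eps s spM.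
have zS' : z \in s @: S by rewrite -sx0 mem_act_set.
have S'z : s @: S = [set z].
  have hitM' : triples_hit (act_mx eps s M) (s @: S) by apply: triples_hit_act.
  exact: normalized_singleton dM' spM' hitM' zS' rowz.
by rewrite S'z; apply: standard_form_singleton; rewrite -?S'z.
Qed.
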